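(* Let \(\mathcal G\) and \(\mathcal H\) be topological groupoids. An algebraic morphism \(\mathcal G\curvearrowright\mathcal H\) induces a functor \(F\colon\mathsf{Top}^{\mathcal H}\to\mathsf{Top}^{\mathcal G}\) with \(\mathsf{Forget}\circ F=\mathsf{Forget}\). The functor turns an \(\mathcal H\)-space \(X\) into a \(\mathcal G\)-space by transporting the left \(\mathcal G\)-action on \(\mathcal H^{(1)}\times_{\mathcal H}X\) along the homeomorphism \(\mathcal H^{(1)}\times_{\mathcal H}X\cong X\), \([h,x]\mapsto h\cdot x\). Conversely, every functor \(F\colon\mathsf{Top}^{\mathcal H}\to\mathsf{Top}^{\mathcal G}\) with \(\mathsf{Forget}\circ F=\mathsf{Forget}\) arises in this way from an algebraic morphism \(\mathcal G\curvearrowright\mathcal H\).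
   Context: An action of a topological groupoid \(\mathcal K\) on a topological space \(X\) is a continuous anchor map \(\varrho\colon X\to\mathcal K^{(0)}\) together with a continuous map \(\{(k,x)\in\mathcal K^{(1)}\times X:\mathrm s(k)=\varrho(x)\}\to X\), \((k,x)\mapsto k\cdot x\), such that \(\varrho(k\cdot x)=\mathrm r(k)\), \(k_1\cdot(k_2\cdot x)=(k_1k_2)\cdot x\) when defined, and \(1_{\varrho(x)}\cdot x=x\). A map \(f\colon X\to Y\) between \(\mathcal K\)-spaces is \(\mathcal K\)-equivariant if \(\varrho_Y\circ f=\varrho_X\) and \(f(k\cdot x)=k\cdot f(x)\) whenever defined. \(\mathsf{Top}^{\mathcal K}\) is the category of \(\mathcal K\)-spaces with \(\mathcal K\)-equivariant continuous maps. \(\mathsf{Forget}\colon\mathsf{Top}^{\mathcal K}\to\mathsf{Top}\) forgets the action. An algebraic morphism \(\mathcal G\curvearrowright\mathcal H\) is an action of \(\mathcal G\) on \(\mathcal H^{(1)}\) commuting with the right translation action of \(\mathcal H\) on \(\mathcal H^{(1)}\) (anchor \(\mathrm s\), \(h\cdot h'=hh'\)). Commuting means: the anchor \(\varrho\) satisfies \(\varrho(hh')=\varrho(h)\), and \(g\cdot(hh')=(g\cdot h)h'\) whenever defined. For a right \(\mathcal H\)-space \(Y\) (anchor \(\varrho_Y\)) and a left \(\mathcal H\)-space \(X\) (anchor \(\varrho_X\)), \(Y\times_{\mathcal H}X\) denotes the quotient of \(\{(y,x):\varrho_Y(y)=\varrho_X(x)\}\) by the relation \((y\cdot h,x)\sim(y,h\cdot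 x)\). Here \(\mathcal H^{(1)}\) is a left \(\mathcal G\)-space via the algebraic morphism and a right \(\mathcal H\)-space via right translation, so \(\mathcal H^{(1)}\times_{\mathcal H}X\) inherits a left \(\mathcal G\)-action. *)

(* topological spaces are mathcomp-analysis
   [topologicalType]s; partial operations of groupoids/actions are encoded
   as total functions whose values only matter on their domain of definition. *)
From HB Require Import structures.
From mathcomp Require Import all_boot all_classical.
From mathcomp Require Import topology.
Set Implicit Arguments. Unset Strict Implicit. Unset Printing Implicit Defensive.
Local Open Scope classical_set_scope.

Record topGroupoid := TopGroupoid {
  gobj : topologicalType;
  garr : topologicalType;
  gs : garr -> gobj;
  gr : garr -> gobj;
  gunit : gobj -> garr;
  ginv : garr -> garr;
  gmul : garr -> garr -> garr;  (* gmul a b = ab, meaningful when gs a = gr b *)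
  gs_unit : forall u, gs (gunit u) = u;
  gr_unit : forall u, gr (gunit u) = u;
  gs_mul : forall a b, gs a = gr b -> gs (gmul a b) = gs b;
  gr_mul : forall a b, gs a = gr b -> gr (gmul a b) = gr a;
  gmulA : forall a b c, gs a = gr b -> gs b = gr c ->
            gmul (gmul a b) c = gmul a (gmul b c);
  gmul1l : forall a, gmul (gunit (gr a)) a = a;
  gmul1r : forall a, gmul a (gunit (gs a)) = a;
  gs_inv : forall a, gs (ginv a) = gr a;
  gr_inv : forall a, gr (ginv a) = gs a;
  gmulV : forall a, gmul a (ginv a) = gunit (gr a);
  gmulVl : forall a, gmul (ginv a) a = gunit (gs a);
  gs_cont : continuous gs;
  gr_cont : continuous gr;
  gunit_cont : continuous gunit;
  ginv_cont : continuous ginv;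
  gmul_cont : {within [set p : garr * garr | gs p.1 = gr p.2],
                 continuous (fun p => gmul p.1 p.2)}
}.

Definition is_action (K : topGroupoid) (X : topologicalType)
    (rho : X -> gobj K) (act : garr K -> X -> X) : Prop :=
  [/\ continuous rho,
      {within [set p : garr K * X | gs p.1 = rho p.2],
         continuous (fun p => act p.1 p.2)},
      (forall k x, gs k = rho x -> rho (act k x) = gr k),
      (forall k1 k2 x, gs k1 = gr k2 -> gs k2 = rho x ->
          act k1 (act k2 x) = act (gmul k1 k2) x) &
      (forall x, act (gunit (rho x)) x = x)].

Record action (K : topGroupoid) (X : topologicalType) := Action {
  anchor : X -> gobj K;
  actf : garr K -> X -> X;
  actionP : is_action anchor actf
}.

Definition equivariant (K : topGroupoid) (X Y : topologicalType)
    (a : action K X) (b : action K Y) (f : X -> Y) : Prop :=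
  (forall x, anchor b (f x) = anchor a x) /\
  (forall k x, gs k = anchor a x -> f (actf a k x) = actf b k (f x)).

(* Since Forget o F
   = Forget, F sends an H-space (X,a) to a G-space with the same underlying
   space X, and sends each morphism f to the same continuous map f; the
   functor laws are then automatic, and the only requirement is that
   F is well defined on morphisms: every continuous H-equivariant map is
   G-equivariant for the image structures. *)
Record forget_functor (G H : topGroupoid) := ForgetFunctor {
  Fobj : forall X : topologicalType, action H X -> action G X;
  Fmor : forall (X Y : topologicalType) (a : action H X) (b : action H Y)
           (f : X -> Y), continuous f -> equivariant a b f ->
           equivariant (Fobj a) (Fobj b) f
}.

Definition commutes_with_right_translation (G H : topGroupoid)
    (alpha : action G (garr H)) : Prop :=
  [/\ (forall h h', gs h = gr h' -> anchor alpha (gmul h h') = anchor alpha h),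
      (forall g h, gs g = anchor alpha h -> gs (actf alpha g h) = gs h) &
      (forall g h h', gs g = anchor alpha h -> gs h = gr h' ->
          actf alpha g (gmul h h') = gmul (actf alpha g h) h')].

Record alg_morphism (G H : topGroupoid) := AlgMorphism {
  amact : action G (garr H);
  amP : commutes_with_right_translation amact
}.

Definition same_action (K : topGroupoid) (X : topologicalType)
    (rho : X -> gobj K) (act : garr K -> X -> X) (b : action K X) : Prop :=
  (forall x, anchor b x = rho x) /\
  (forall k x, gs k = rho x -> actf b k x = act k x).

Section Induced.
Variables (G H : topGroupoid) (alpha : alg_morphism G H).
Variables (X : topologicalType) (a : action H X).

(* The fibred product {(h,x) | s h = rho_X x} underlying H^(1) x_H X. *)
Definition fibprod : set (garr H * X) := [set p | gs p.1 = anchor a p.2].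

Definition bal_map (p : garr H * X) : X := actf a p.1 p.2.

(* The relation (y.h, x) ~ (y, h.x) defining the balanced product. *)
Definition bal_rel (p q : garr H * X) : Prop :=
  exists h, [/\ gs q.1 = gr h, gs h = anchor a p.2,
               p.1 = gmul q.1 h & q.2 = actf a h p.2].

Definition bal_act (g : garr G) (p : garr H * X) : garr H * X :=
  (actf (amact alpha) g p.1, p.2).

(* The G-action on X transported along H^(1) x_H X ~= X, [h,x] |-> h.x,
   whose inverse is x |-> [1_{rho x}, x]:
     anchor x = varrho(1_{rho_X x}),   g.x = (g.1_{rho_X x}).x          *)
Definition ind_anchor (x : X) : gobj G :=
  anchor (amact alpha) (gunit (anchor a x)).
Definition ind_act (g : garr G) (x : X) : X :=
  actf a (actf (amact alpha) g (gunit (anchor a x))) x.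

End Induced.

(** An algebraic morphism alpha : G ~> H lets an arrow g of G act on a point
    x of an H-space X through the arrow alpha(g, 1_{rho x}) of H.  This is
    the action g.[h,x] = [g.h,x] transported along [h,x] |-> h.x, which is
    a quotient map because x |-> (1_{rho x}, x) is a continuous section.
    Conversely, a functor F preserving underlying spaces makes H^(1), with
    left translation, a G-space; this is alpha.  As the projection
    H^(1) x Y -> H^(1) and the maps t |-> (t.1, y) are H-equivariant, F acts
    on H^(1) x Y through alpha on the first factor only.  The fibred product
    {(h,x) | s h = rho x} is an H-subspace of H^(1) x X on which
    [h,x] |-> h.x is equivariant, so F X is the action transported from
    alpha; for X = H^(1) this says that alpha commutes with right
    translation. *)
From HB Require Import structures.
From mathcomp Require Import all_boot all_classical.
From mathcomp Require Import topology.
Local Open Scope classical_set_scope.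

Section Continuity.
Context {T U V : topologicalType}.

Lemma fst_continuous : continuous (@fst T U).
Proof. by move=> x; exact: cvg_fst. Qed.

Lemma snd_continuous : continuous (@snd T U).
Proof. by move=> x; exact: cvg_snd. Qed.

Lemma comp_continuous [f : T -> U] [g : U -> V] :
  continuous f -> continuous g -> continuous (g \o f).
Proof. by move=> cf cg x; apply: continuous_comp; [exact: cf | exact: cg]. Qed.

Lemma pair_continuous [f : T -> U] [g : T -> V] :
  continuous f -> continuous g -> continuous (fun x => (f x, g x)).
Proof. by move=> cf cg x; apply: cvg_pair; [exact: cf | exact: cg]. Qed.

Lemma within_continuous_pair [A : set T] [f : T -> U] [g : T -> V] :
  {within A, continuous f} -> {within A, continuous g} ->
  {within A, continuous (fun x => (f x, g x))}.
Proof. by move=> cf cg x; apply: cvg_pair; [exact: cf | exact: cg]. Qed.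

Lemma within_continuous_comp_within [A : set T] [B : set U]
    [f : T -> U] [g : U -> V] :
  (forall x, A x -> B (f x)) ->
  {within A, continuous f} -> {within B, continuous g} ->
  {within A, continuous (g \o f)}.
Proof.
move=> AB /subspace_sigL_continuousP cf /subspace_sigL_continuousP cg.
apply/subspace_sigL_continuousP.
pose fAB (x : A) : B :=
  exist _ (f (set_val x)) (mem_set (AB _ (set_mem (valP x)))).
have cfAB : continuous fAB by apply: (@continuous_comp_initial _ _ _ set_val).
by move=> x; exact: (continuous_comp (cfAB x) (cg (fAB x))).
Qed.

Lemma open_of_continuous_section [A : set T] [f : T -> U] [s : U -> T]
    [W : set U] [O : set T] :
  continuous s -> (forall y, A (s y)) -> (forall y, f (s y) = y) ->
  open O -> A `&` f @^-1` W = A `&` O -> open W.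
Proof.
move=> cs As fsK oO AWO.
have -> : W = s @^-1` O.
  apply/seteqP; split=> y /= Wy.
  - have : (A `&` f @^-1` W) (s y) by split; rewrite //= fsK.
    by rewrite AWO => -[].
  - have : (A `&` O) (s y) by [].
    by rewrite -AWO => -[_ /=]; rewrite fsK.
by move/continuousP: cs; apply.
Qed.

End Continuity.

Lemma actf_within_continuous {K : topGroupoid} {X T : topologicalType}
    {rho : X -> gobj K} {act : garr K -> X -> X}
    [A : set T] [k : T -> garr K] [x : T -> X] :
  is_action rho act ->
  {within A, continuous k} -> {within A, continuous x} ->
  (forall t, A t -> gs (k t) = rho (x t)) ->
  {within A, continuous (fun t => act (k t) (x t))}.
Proof.
case=> _ cact _ _ _ ck cx kx.
exact: (within_continuous_comp_within (f := fun t => (k t, x t))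
          (B := [set p | gs p.1 = rho p.2]) (g := fun p => act p.1 p.2)
          kx (within_continuous_pair ck cx) cact).
Qed.

Section ActionLaws.
Context {K : topGroupoid} {X : topologicalType} (a : action K X).

Lemma anchor_continuous : continuous (anchor a).
Proof. by case: (actionP a). Qed.

Lemma unit_anchor_continuous : continuous (fun x => gunit (anchor a x)).
Proof.
move=> x; apply: (continuous_comp (g := @gunit K)).
  exact: anchor_continuous.
exact: gunit_cont.
Qed.

Lemma actf_continuous :
  {within [set p | gs p.1 = anchor a p.2], continuous (fun p => actf a p.1 p.2)}.
Proof. by case: (actionP a). Qed.

Lemma anchor_actf [k x] : gs k = anchor a x -> anchor a (actf a k x) = gr k.
Proof. by case: (actionP a) => _ _ + _ _; apply. Qed.

Lemma actf_mul k1 k2 x : gs k1 = gr k2 -> gs k2 = anchor a x ->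
  actf a k1 (actf a k2 x) = actf a (gmul k1 k2) x.
Proof. by case: (actionP a) => _ _ _ + _; apply. Qed.

Lemma actf_unit x : actf a (gunit (anchor a x)) x = x.
Proof. by case: (actionP a). Qed.

End ActionLaws.

Section LeftTranslation.
Variable K : topGroupoid.

Lemma left_translation_is_action : is_action (@gr K) (@gmul K).
Proof.
split.
- exact: gr_cont.
- exact: gmul_cont.
- by move=> k h e; rewrite gr_mul.
- by move=> k1 k2 h e1 e2; rewrite gmulA.
- by move=> h; rewrite gmul1l.
Qed.

Definition left_translation : action K (garr K) :=
  Action left_translation_is_action.

Lemma left_translation_fst_is_action (Y : topologicalType) :
  is_action (fun p : garr K * Y => gr p.1) (fun k p => (gmul k p.1, p.2)).
Proof.
split.
- by move=> p; apply: continuous_comp; [exact: fst_continuous | exact: gr_cont].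
- have csnd2 : continuous (fun p : garr K * (garr K * Y) => p.2.2).
    by move=> p; apply: continuous_comp; exact: snd_continuous.
  have csnd1 : continuous (fun p : garr K * (garr K * Y) => p.2.1).
    by move=> p; apply: continuous_comp; [exact: snd_continuous | exact: fst_continuous].
  apply: within_continuous_pair; last exact: continuous_subspaceT.
  apply: (actf_within_continuous left_translation_is_action) => //.
  + exact/continuous_subspaceT/fst_continuous.
  + exact: continuous_subspaceT.
- by move=> k p e; rewrite gr_mul.
- by move=> k1 k2 p e1 e2; rewrite gmulA.
- by case=> h y; rewrite /= gmul1l.
Qed.

Definition left_translation_fst (Y : topologicalType) : action K (garr K * Y)%type :=
  Action (left_translation_fst_is_action Y).

End LeftTranslation.

Section BalancedProduct.
Context {H : topGroupoid} {X : topologicalType} (a : action H X).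

Lemma fibprod_unit x : fibprod a (gunit (anchor a x), x).
Proof. exact: gs_unit. Qed.

Lemma bal_map_unit x : bal_map a (gunit (anchor a x), x) = x.
Proof. exact: actf_unit. Qed.

Lemma bal_map_surjective x : exists2 p, fibprod a p & bal_map a p = x.
Proof. by exists (gunit (anchor a x), x); [exact: fibprod_unit | exact: bal_map_unit]. Qed.

Lemma bal_map_eq p q : fibprod a p -> fibprod a q ->
  bal_map a p = bal_map a q <-> bal_rel a p q.
Proof.
case: p q => [h x] [h' x']; rewrite /fibprod /bal_map /bal_rel /= => hx hx'.
split=> [E | [k [e1 e2 -> ->]]]; last by rewrite actf_mul.
have grr : gr h = gr h' by rewrite -(anchor_actf a hx) -(anchor_actf a hx') E.
have e : gs (ginv h') = gr h by rewrite gs_inv grr.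
exists (gmul (ginv h') h); split.
- by rewrite gr_mul // gr_inv.
- by rewrite gs_mul.
- by rewrite -gmulA ?gr_inv // gmulV -grr gmul1l.
- by rewrite -actf_mul ?gs_mul ?gr_inv // E actf_mul ?gs_inv // gmulVl hx' actf_unit.
Qed.

Lemma bal_map_continuous : {within fibprod a, continuous (bal_map a)}.
Proof. exact: actf_continuous. Qed.

Lemma unit_section_continuous :
  continuous (fun x : X => (gunit (anchor a x), x)).
Proof.
by apply: pair_continuous => [|x]; [exact: unit_anchor_continuous | exact: cvg_id].
Qed.

Lemma bal_map_quotient (U : set X) : open U <->
  exists2 V : set (garr H * X), open V &
    fibprod a `&` (bal_map a @^-1` U) = fibprod a `&` V.
Proof.
split=> [oU | [V oV UV]].
- have /continuousP/(_ U oU)/open_subspaceP[V oV e] := bal_map_continuous.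
  by exists V => //; rewrite setIC -e setIC.
- exact: (open_of_continuous_section unit_section_continuous
            fibprod_unit bal_map_unit oV UV).
Qed.

(* Off the domain [gs k = gr (val s).1] the product may leave [fibprod a];
   [insubd] then returns [s] itself. *)
Definition fib_act (k : garr H) (s : fibprod a) : fibprod a :=
  insubd s (gmul k (val s).1, (val s).2).

Lemma fib_act_val [k : garr H] [s : fibprod a] : gs k = gr (val s).1 ->
  val (fib_act k s) = (gmul k (val s).1, (val s).2).
Proof.
move=> ks; rewrite val_insubd mem_set //=.
by rewrite /fibprod /= gs_mul //; exact: (set_mem (valP s)).
Qed.

Lemma val_fib_continuous : continuous (fun s : fibprod a => val s).
Proof. exact: initial_continuous. Qed.

Lemma fib_is_action : is_action (fun s : fibprod a => gr (val s).1) fib_act.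
Proof.
have cfst : continuous (fun s : fibprod a => (val s).1).
  exact: (comp_continuous val_fib_continuous fst_continuous).
split.
- exact: (comp_continuous cfst (@gr_cont H)).
- apply: (@continuous_comp_initial _ _ _ set_val).
  apply: (@subspace_eq_continuous _ _ _
    (fun q : garr H * fibprod a => (gmul q.1 (val q.2).1, (val q.2).2))).
    by move=> q /set_mem qs; rewrite set_valE /= fib_act_val.
  apply: within_continuous_pair.
  + apply: (actf_within_continuous (left_translation_is_action H)) => //.
    * exact/continuous_subspaceT/fst_continuous.
    * exact/continuous_subspaceT/(comp_continuous snd_continuous cfst).
  + apply: continuous_subspaceT.
    exact: (comp_continuous snd_continuous
              (comp_continuous val_fib_continuous snd_continuous)).
- by move=> k s ks; rewrite fib_act_val // gr_mul.
- move=> k1 k2 s e12 e2; apply: val_inj.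
  have e1 : gs k1 = gr (val (fib_act k2 s)).1 by rewrite fib_act_val //= gr_mul.
  have e : gs (gmul k1 k2) = gr (val s).1 by rewrite gs_mul.
  by rewrite (fib_act_val e1) (fib_act_val e2) (fib_act_val e) /= gmulA.
- move=> s; apply: val_inj; rewrite fib_act_val ?gs_unit // gmul1l.
  by case: (val s).
Qed.

Definition fib_action : action H (fibprod a) := Action fib_is_action.

Lemma val_fib_equivariant :
  equivariant fib_action (left_translation_fst H X) (fun s => val s).
Proof. by split=> // k s ks; rewrite /= fib_act_val. Qed.

Lemma bal_map_fib_continuous : continuous (fun s : fibprod a => bal_map a (val s)).
Proof. exact/subspace_sigL_continuousP/bal_map_continuous. Qed.

Lemma bal_map_fib_equivariant :
  equivariant fib_action a (fun s => bal_map a (val s)).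
Proof.
have fs (s : fibprod a) : fibprod a (val s) := set_mem (valP s).
split=> [s | k s ks]; first exact: (anchor_actf a (fs s)).
by rewrite /= fib_act_val // /bal_map actf_mul //; exact: fs.
Qed.

End BalancedProduct.

Section InducedAction.
Context {G H : topGroupoid} (alpha : alg_morphism G H).
Local Notation al := (amact alpha).

Lemma anchor_alg_mul h h' : gs h = gr h' ->
  anchor al (gmul h h') = anchor al h.
Proof. by case: (amP alpha) => + _ _; apply. Qed.

Lemma gs_actf_alg g h : gs g = anchor al h -> gs (actf al g h) = gs h.
Proof. by case: (amP alpha) => _ + _; apply. Qed.

Lemma actf_alg_mul g h h' : gs g = anchor al h -> gs h = gr h' ->
  actf al g (gmul h h') = gmul (actf al g h) h'.
Proof. by case: (amP alpha) => _ _; apply. Qed.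

Lemma anchor_alg_unit h : anchor al (gunit (gr h)) = anchor al h.
Proof. by rewrite -[in RHS](gmul1l h) anchor_alg_mul ?gs_unit. Qed.

Section OnSpace.
Context {X : topologicalType} (a : action H X).

Lemma gs_actf_alg_unit g x : gs g = ind_anchor alpha a x ->
  gs (actf al g (gunit (anchor a x))) = anchor a x.
Proof. by move=> gx; rewrite gs_actf_alg // gs_unit. Qed.

Lemma ind_is_action : is_action (ind_anchor alpha a) (ind_act alpha a).
Proof.
split.
- have -> : ind_anchor alpha a = (anchor al \o @gunit H) \o anchor a by [].
  move=> x; apply: continuous_comp; first exact: anchor_continuous.
  by apply: continuous_comp; [exact: gunit_cont | exact: anchor_continuous].
- have cunit : continuous (fun p : garr G * X => gunit (anchor a p.2)).
    move=> p; exact: (continuous_comp (snd_continuous p) (unit_anchor_continuous a p.2)).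
  apply: (actf_within_continuous (actionP a)); last by move=> p; exact: gs_actf_alg_unit.
  + apply: (actf_within_continuous (actionP al)) => //.
    - exact/continuous_subspaceT/fst_continuous.
    - exact: continuous_subspaceT.
  + exact/continuous_subspaceT/snd_continuous.
- move=> g x gx; rewrite /ind_anchor /ind_act.
  by rewrite anchor_actf ?gs_actf_alg_unit // anchor_alg_unit anchor_actf.
- move=> g1 g2 x e12 e2; rewrite /ind_act.
  set k2 := actf al g2 (gunit (anchor a x)).
  have gk2 : gs k2 = anchor a x by exact: gs_actf_alg_unit.
  have g1k2 : gs g1 = anchor al (gunit (gr k2)).
    by rewrite anchor_alg_unit anchor_actf.
  rewrite anchor_actf // actf_mul ?gs_actf_alg ?gs_unit //.
  by rewrite -actf_alg_mul ?gs_unit // gmul1l /k2 actf_mul.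
- by move=> x; rewrite /ind_act /ind_anchor actf_unit actf_unit.
Qed.

Definition ind_action : action G X := Action ind_is_action.

Lemma bal_act_equivariant g p : fibprod a p -> gs g = anchor al p.1 ->
  [/\ fibprod a (bal_act alpha g p),
      ind_anchor alpha a (bal_map a p) = anchor al p.1 &
      bal_map a (bal_act alpha g p) = ind_act alpha a g (bal_map a p)].
Proof.
case: p => h x; rewrite /fibprod /bal_act /bal_map /ind_anchor /ind_act /= => hx gh.
have gu : gs g = anchor al (gunit (gr h)) by rewrite anchor_alg_unit.
split; first by rewrite gs_actf_alg.
- by rewrite anchor_actf // anchor_alg_unit.
- rewrite anchor_actf // actf_mul ?gs_actf_alg ?gs_unit //.
  by rewrite -actf_alg_mul ?gs_unit // gmul1l.
Qed.

End OnSpace.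

Lemma ind_equivariant (X Y : topologicalType) (a : action H X) (b : action H Y)
    (f : X -> Y) : continuous f -> equivariant a b f ->
  equivariant (ind_action a) (ind_action b) f.
Proof.
move=> _ [fa fk]; split=> [x | g x gx] /=; rewrite /ind_anchor /ind_act fa //.
by rewrite fk // gs_actf_alg_unit.
Qed.

Definition ind_functor : forget_functor G H := ForgetFunctor ind_equivariant.

End InducedAction.

Section FunctorToMorphism.
Context {G H : topGroupoid} (F : forget_functor G H).
Local Notation al := (Fobj F (left_translation H)).

Lemma Fobj_left_translation_fst {Y : topologicalType} (p : garr H * Y) :
  anchor (Fobj F (left_translation_fst H Y)) p = anchor al p.1 /\
  forall g, gs g = anchor al p.1 ->
    actf (Fobj F (left_translation_fst H Y)) g p = (actf al g p.1, p.2).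
Proof.
have [fst_anchor fst_actf] := Fmor F fst_continuous
  (conj (fun _ => erefl) (fun _ _ _ => erefl)
     : equivariant (left_translation_fst H Y) (left_translation H) fst).
(* [q |-> (q.1, p.2)] is equivariant and fixes p, so F cannot move p.2 *)
have [_ fix_actf] := Fmor F
  (pair_continuous fst_continuous (@cst_continuous _ _ p.2))
  (conj (fun _ => erefl) (fun _ _ _ => erefl)
     : equivariant (left_translation_fst H Y) (left_translation_fst H Y)
         (fun q => (q.1, p.2))).
split=> [|g gp]; first by rewrite -fst_anchor.
have gp' : gs g = anchor (Fobj F (left_translation_fst H Y)) p by rewrite -fst_anchor.
by rewrite -fst_actf // fix_actf // -surjective_pairing.
Qed.

Section OnSpace.
Context {X : topologicalType} (a : action H X) {h : garr H} {x : X}.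
Hypothesis hx : gs h = anchor a x.

Let s : fibprod a := exist _ (h, x) (mem_set hx).

Let Fval := Fmor F (val_fib_continuous a) (val_fib_equivariant a).
Let Fbal := Fmor F (bal_map_fib_continuous a) (bal_map_fib_equivariant a).

Lemma anchor_Fobj_actf : anchor (Fobj F a) (actf a h x) = anchor al h.
Proof.
have [[bal_anchor _] [val_anchor _]] := (Fbal, Fval).
rewrite -[actf a h x]/(bal_map a (val s)) bal_anchor -val_anchor.
exact: (Fobj_left_translation_fst (val s)).1.
Qed.

Lemma Fobj_actf [g : garr G] : gs g = anchor al h ->
  actf (Fobj F a) g (actf a h x) = actf a (actf al g h) x.
Proof.
move=> gh; have [[_ bal_actf] [val_anchor val_actf]] := (Fbal, Fval).
have [anchor_s actf_s] := Fobj_left_translation_fst (val s).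
have gs' : gs g = anchor (Fobj F (fib_action a)) s by rewrite -val_anchor anchor_s.
rewrite -[actf a h x]/(bal_map a (val s)) -(bal_actf _ _ gs').
by rewrite val_actf // actf_s.
Qed.

End OnSpace.

Lemma gs_actf_Fobj g h : gs g = anchor al h -> gs (actf al g h) = gs h.
Proof.
move=> gh.
have cgraph : continuous (fun h : garr H => (h, gs h)).
  by apply: pair_continuous => [h'|]; [exact: cvg_id | exact: gs_cont].
have egraph : equivariant (left_translation H) (left_translation_fst H (gobj H))
    (fun h => (h, gs h)).
  by split=> // k h' kh'; rewrite /= gs_mul.
have [_ graph_actf] := Fmor F cgraph egraph.
have [_ actf_fst] := Fobj_left_translation_fst (h, gs h).
by have := graph_actf _ _ gh; rewrite actf_fst // => -[].
Qed.

Lemma Fobj_commutes_with_right_translation : commutes_with_right_translation al.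
Proof.
split=> [h h' hh' | g h | g h h' gh hh'].
- exact: (anchor_Fobj_actf (left_translation H) hh').
- exact: gs_actf_Fobj.
- exact: (Fobj_actf (left_translation H) hh' gh).
Qed.

Definition alg_morphism_of_functor : alg_morphism G H :=
  AlgMorphism Fobj_commutes_with_right_translation.

Lemma Fobj_ind_action (X : topologicalType) (a : action H X) :
  same_action (ind_anchor alg_morphism_of_functor a)
              (ind_act alg_morphism_of_functor a) (Fobj F a).
Proof.
split=> [x | g x gx]; rewrite -[in LHS](actf_unit a x).
- exact: (anchor_Fobj_actf a (gs_unit _)).
- exact: (Fobj_actf a (gs_unit _) gx).
Qed.

End FunctorToMorphism.

Theorem theorem4p12 (G H : topGroupoid) :
  (forall alpha : alg_morphism G H,
     (forall (X : topologicalType) (a : action H X),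
        [/\ (forall x : X, exists2 p, fibprod a p & bal_map a p = x),
            (forall p q, fibprod a p -> fibprod a q ->
               (bal_map a p = bal_map a q <-> bal_rel a p q)),
            {within fibprod a, continuous (bal_map a)},
            (forall U : set X, open U <->
               exists2 V : set (garr H * X), open V &
                 fibprod a `&` (bal_map a @^-1` U) = fibprod a `&` V) &
            (forall g p, fibprod a p ->
               gs g = anchor (amact alpha) p.1 ->
               [/\ fibprod a (bal_act alpha g p),
                   ind_anchor alpha a (bal_map a p) = anchor (amact alpha) p.1 &
                   bal_map a (bal_act alpha g p)
                     = ind_act alpha a g (bal_map a p)])]) /\
     exists F : forget_functor G H,
       forall (X : topologicalType) (a : action H X),
         same_action (ind_anchor alpha a) (ind_act alpha a) (Fobj F a))
  /\
  (forall F : forget_functor G H,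
     exists alpha : alg_morphism G H,
       forall (X : topologicalType) (a : action H X),
         same_action (ind_anchor alpha a) (ind_act alpha a) (Fobj F a)).
Proof.
split=> [alpha | F]; last first.
  by exists (alg_morphism_of_functor F); exact: Fobj_ind_action.
split=> [X a | ].
  split; [exact: bal_map_surjective | exact: bal_map_eq
         | exact: bal_map_continuous | exact: bal_map_quotient
         | exact: bal_act_equivariant].
by exists (ind_functor alpha) => X a; split.
Qed.
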